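(* Let $v$ be a continuous viscosity supersolution of the quasi-variational inequality with boundary-terminal condition, and assume $\sup_{[0,T]\times[0,\infty)}(|b|+|\sigma|)<\infty$. Let $\rho=\frac12\min_{z\neq0}c(z)>0$, $C_5=\|b\|_\infty(\max(C_2,C_3)+1)+2\rho$, $g(t,x,y,z)=x+y+C_5(T-t)$, and for $\varepsilon>0$ set $v^\varepsilon=v+\varepsilon g$. Then for every $(\bar t,\bar x,\bar y,\bar z)\in(0,T)\times O$ and every function $\varphi^\varepsilon$, $C^1$ in $t$ and $C^2$ in $(x,y)$, with $\varphi^\varepsilon\le v^\varepsilon$ on $(0,T)\times O$ and $\varphi^\varepsilon=v^\varepsilon$ at $(\bar t,\bar x,\bar y,\bar z)$, $$(\varphi^\varepsilon-\mathcal S\varphi^\varepsilon)(\bar t,\bar x,\bar y,\bar z)>\varepsilon\rho\quad\text{and}\quad(-\varphi^\varepsilon_t-\mathcal L\varphi^\varepsilon)(\bar t,\bar x,\bar y,\bar z)>\varepsilon\rho.$$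
   Context: $T>0$; $b,\sigma:[0,T]\times[0,\infty)\to\mathbb R$. Transaction cost $c:\mathbb Z\to\mathbb R$ with $c(0)=0$, $c(z)>0$ for $z\ne0$, $c(z_1)+c(z_2)\ge c(z_1+z_2)$. Utility $U$ as a nonnegative strictly increasing strictly concave function on $[0,\infty)$ with $U(0)=0$. $\mathcal K=\{-C_2,\dots,C_3\}$ ($C_2,C_3$ positive integers). $O=\{(x,y,z):x>0,\ y>c(-z),\ z\in\mathcal K\}$. $\Gamma(y,z)=\{\tilde z\in\mathcal K: c(\tilde z-z)+c(-\tilde z)\le y,\ \tilde z\ne z\}$. Operators: $\mathcal L\varphi=b\varphi_x+\frac12\sigma^2\varphi_{xx}+zb\varphi_y+\frac12z^2\sigma^2\varphi_{yy}+z\sigma^2\varphi_{xy}$ ($b,\sigma$ at $(t,x)$); $\mathcal S\varphi(t,x,y,z)=\max_{\tilde z\in\Gamma(y,z)}\varphi(t,x,y-c(\tilde z-z),\tilde z)$ (max over empty set $=-\infty$). Parabolic boundary $\partial^*([0,T)\times O)=([0,T]\times\bar O)\setminus([0,T)\times O)$. QVI: $\min\{-u_t-\mathcal Lu,\ u-\mathcal Su\}=0$ on $[0,T)\times O$, boundary-terminal condition $u=U(y-c(-z))$ on $\partial^*([0,T)\times O)$. Viscosity supersolution: for every $(t_0,x_0,y_0,z_0)\in(0,T)\times O$ and every $\varphi$ ($C^1$ in $t$, $C^2$ in $(x,y)$) with $\varphi\le v$ and $\varphi=v$ at that point, $\min\{(-\varphi_t-\mathcal L\varphi),(\varphi-\mathcal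 S\varphi)\}(t_0,x_0,y_0,z_0)\ge0$; and $v\ge U(y-c(-z))$ on $\partial^*([0,T)\times O)$. *)

From Stdlib Require Import Reals Lra ZArith List.
Open Scope R_scope.

Definition inK (C2 C3 : Z) (z : Z) : Prop := (- C2 <= z <= C3)%Z.

Definition Klist (C2 C3 : Z) : list Z :=
  List.map (fun k => (- C2 + Z.of_nat k)%Z) (List.seq 0 (Z.to_nat (C2 + C3 + 1))).

Definition inO (c : Z -> R) (C2 C3 : Z) (x y : R) (z : Z) : Prop :=
  0 < x /\ c (- z)%Z < y /\ inK C2 C3 z.

Definition inObar (c : Z -> R) (C2 C3 : Z) (x y : R) (z : Z) : Prop :=
  0 <= x /\ c (- z)%Z <= y /\ inK C2 C3 z.

Definition in_par_boundary (T : R) (c : Z -> R) (C2 C3 : Z) (t x y : R) (z : Z) : Prop :=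
  (0 <= t <= T /\ inObar c C2 C3 x y z) /\ ~ (0 <= t < T /\ inO c C2 C3 x y z).

Definition inGamma_b (c : Z -> R) (C2 C3 : Z) (y : R) (z zt : Z) : bool :=
  if Rle_dec (c (zt - z)%Z + c (- zt)%Z) y then negb (Z.eqb zt z) else false.

Definition Gamma_list (c : Z -> R) (C2 C3 : Z) (y : R) (z : Z) : list Z :=
  List.filter (inGamma_b c C2 C3 y z) (Klist C2 C3).

(* Maximum of a finite list of reals; None stands for the max over the empty set, i.e. -infinity. *)
Definition list_max (l : list R) : option R :=
  List.fold_right (fun r acc => match acc with
                                | None => Some r
                                | Some m => Some (Rmax r m) end) None l.

Definition Sop (c : Z -> R) (C2 C3 : Z) (phi : R -> R -> R -> Z -> R)
  (t x y : R) (z : Z) : option R :=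
  list_max (List.map (fun zt => phi t x (y - c (zt - z)%Z) zt) (Gamma_list c C2 C3 y z)).

(* (u - s) > a, where s is an extended real in [-infinity, +infinity) (None = -infinity). *)
Definition minus_ext_gt (u : R) (s : option R) (a : R) : Prop :=
  match s with None => True | Some m => u - m > a end.

(* min{A, u - s} >= 0, with s in [-infinity, +infinity) (None = -infinity, so u - s = +infinity). *)
Definition min_ext_ge0 (A u : R) (s : option R) : Prop :=
  A >= 0 /\ match s with None => True | Some m => u - m >= 0 end.

Definition Lop (b sigma : R -> R -> R) (t x : R) (z : Z)
  (px py pxx pxy pyy : R) : R :=
  b t x * px + / 2 * (sigma t x) ^ 2 * pxx
  + IZR z * b t x * py + / 2 * (IZR z) ^ 2 * (sigma t x) ^ 2 * pyy
  + IZR z * (sigma t x) ^ 2 * pxy.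

Definition cont3_at (f : R -> R -> R -> R) (t x y : R) : Prop :=
  forall e, 0 < e -> exists d, 0 < d /\
    forall t' x' y', Rabs (t' - t) < d -> Rabs (x' - x) < d -> Rabs (y' - y) < d ->
      Rabs (f t' x' y' - f t x y) < e.

Definition inD (T t x : R) : Prop := 0 < t < T /\ 0 < x.

Definition is_C12 (T : R) (phi phit phix phiy phixx phixy phiyy : R -> R -> R -> Z -> R) : Prop :=
  forall t x y z, inD T t x ->
    derivable_pt_lim (fun s => phi s x y z) t (phit t x y z) /\
    derivable_pt_lim (fun s => phi t s y z) x (phix t x y z) /\
    derivable_pt_lim (fun s => phi t x s z) y (phiy t x y z) /\
    derivable_pt_lim (fun s => phix t s y z) x (phixx t x y z) /\
    derivable_pt_lim (fun s => phix t x s z) y (phixy t x y z) /\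
    derivable_pt_lim (fun s => phiy t s y z) x (phixy t x y z) /\
    derivable_pt_lim (fun s => phiy t x s z) y (phiyy t x y z) /\
    cont3_at (fun a b' d => phi a b' d z) t x y /\
    cont3_at (fun a b' d => phit a b' d z) t x y /\
    cont3_at (fun a b' d => phix a b' d z) t x y /\
    cont3_at (fun a b' d => phiy a b' d z) t x y /\
    cont3_at (fun a b' d => phixx a b' d z) t x y /\
    cont3_at (fun a b' d => phixy a b' d z) t x y /\
    cont3_at (fun a b' d => phiyy a b' d z) t x y.

Definition continuous_on_closure (T : R) (c : Z -> R) (C2 C3 : Z)
  (v : R -> R -> R -> Z -> R) : Prop :=
  forall t x y z, 0 <= t <= T -> inObar c C2 C3 x y z ->
    forall e, 0 < e -> exists d, 0 < d /\
      forall t' x' y', 0 <= t' <= T -> inObar c C2 C3 x' y' z ->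
        Rabs (t' - t) < d -> Rabs (x' - x) < d -> Rabs (y' - y) < d ->
        Rabs (v t' x' y' z - v t x y z) < e.

Definition viscosity_supersolution (T : R) (b sigma : R -> R -> R) (c : Z -> R)
  (U : R -> R) (C2 C3 : Z) (v : R -> R -> R -> Z -> R) : Prop :=
  (forall t0 x0 y0 z0, 0 < t0 < T -> inO c C2 C3 x0 y0 z0 ->
    forall phi phit phix phiy phixx phixy phiyy,
      is_C12 T phi phit phix phiy phixx phixy phiyy ->
      (forall t x y z, 0 < t < T -> inO c C2 C3 x y z -> phi t x y z <= v t x y z) ->
      phi t0 x0 y0 z0 = v t0 x0 y0 z0 ->
      min_ext_ge0
        (- phit t0 x0 y0 z0
         - Lop b sigma t0 x0 z0 (phix t0 x0 y0 z0) (phiy t0 x0 y0 z0)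
               (phixx t0 x0 y0 z0) (phixy t0 x0 y0 z0) (phiyy t0 x0 y0 z0))
        (phi t0 x0 y0 z0) (Sop c C2 C3 phi t0 x0 y0 z0))
  /\ (forall t x y z, in_par_boundary T c C2 C3 t x y z ->
        v t x y z >= U (y - c (- z)%Z)).

From Pilot Require Import Defs.
From Stdlib Require Import Reals ZArith List Lra Lia.
Open Scope R_scope.

(* Subtracting the affine function [eps * g] from [phi] gives a test function for [v]
   itself, whose derivatives differ from those of [phi] by explicit constants.  The
   supersolution inequalities for the perturbed function, evaluated back in terms of
   [phi], leave a margin of at least [eps * 2 rho]: an intervention changes [y] by at
   least [c (zt - z) >= 2 rho], and [C5] is chosen so that [-g_t - L g] dominates the
   drift [b (1 + z)] by [2 rho]. *)

Lemma list_max_None (l : list R) : Defs.list_max l = None -> l = nil.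
Proof. destruct l; simpl; [reflexivity|]. destruct (Defs.list_max l); discriminate. Qed.

Lemma list_max_ub (l : list R) m :
  Defs.list_max l = Some m -> forall r, In r l -> r <= m.
Proof.
  revert m; induction l as [|a l IH]; intros m Hm r Hr; [destruct Hr|]; simpl in Hm.
  destruct (Defs.list_max l) as [m'|] eqn:E; injection Hm as <-; destruct Hr as [<-|Hr].
  - apply Rmax_l.
  - eapply Rle_trans; [apply (IH m' eq_refl r Hr)|apply Rmax_r].
  - apply Rle_refl.
  - rewrite (list_max_None l E) in Hr; destruct Hr.
Qed.

Lemma list_max_In (l : list R) m : Defs.list_max l = Some m -> In m l.
Proof.
  revert m; induction l as [|a l IH]; intros m Hm; [discriminate|]; simpl in Hm.
  destruct (Defs.list_max l) as [m'|] eqn:E; injection Hm as <-.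
  - unfold Rmax; destruct (Rle_dec a m'); [right; apply IH|left]; reflexivity.
  - left; reflexivity.
Qed.

Section Intervention.

Variables (c : Z -> R) (C2 C3 : Z).

Lemma in_Gamma_list_neq y z zt : In zt (Gamma_list c C2 C3 y z) -> zt <> z.
Proof.
  unfold Gamma_list, inGamma_b; rewrite filter_In; intros [_ Hg] ->.
  destruct (Rle_dec _ _); [rewrite Z.eqb_refl in Hg|]; discriminate.
Qed.

Lemma Sop_witness phi t x y z m :
  Sop c C2 C3 phi t x y z = Some m ->
  exists zt, In zt (Gamma_list c C2 C3 y z) /\ m = phi t x (y - c (zt - z)%Z) zt.
Proof.
  intros Hm; apply list_max_In, in_map_iff in Hm.
  destruct Hm as [zt [<- Hzt]]; exists zt; split; [exact Hzt|reflexivity].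
Qed.

Lemma Sop_ge phi t x y z zt :
  In zt (Gamma_list c C2 C3 y z) ->
  exists m, Sop c C2 C3 phi t x y z = Some m /\ phi t x (y - c (zt - z)%Z) zt <= m.
Proof.
  intros Hzt; unfold Sop.
  set (f := fun zt => phi t x (y - c (zt - z)%Z) zt).
  destruct (Defs.list_max (map f (Gamma_list c C2 C3 y z))) as [m|] eqn:E.
  - exists m; split; [reflexivity|]. exact (list_max_ub _ _ E (f zt) (in_map f _ _ Hzt)).
  - apply list_max_None in E; destruct (Gamma_list c C2 C3 y z); [destruct Hzt|discriminate].
Qed.

(* Subtracting [k + eps * y] from a test function lowers its value at an
   intervention target, whose [y] is reduced by [c (zt - z) >= delta], by
   [eps * delta] less than at the current state. *)
Lemma Sop_gap_of_shift phi psi t x y z k eps delta A a :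
  0 <= eps -> a < eps * delta ->
  (forall zt, zt <> z -> delta <= c (zt - z)%Z) ->
  (forall y' z', psi t x y' z' = phi t x y' z' - (k + eps * y')) ->
  min_ext_ge0 A (psi t x y z) (Sop c C2 C3 psi t x y z) ->
  minus_ext_gt (phi t x y z) (Sop c C2 C3 phi t x y z) a.
Proof.
  intros Heps Ha Hc Hpsi [_ Hpsi_gap]; unfold minus_ext_gt.
  destruct (Sop c C2 C3 phi t x y z) as [m|] eqn:E; [|exact I].
  destruct (Sop_witness _ _ _ _ _ _ E) as [zt [Hzt ->]].
  destruct (Sop_ge psi t x y z zt Hzt) as [m' [E' Hm']]; rewrite E' in Hpsi_gap.
  assert (eps * delta <= eps * c (zt - z)%Z)
    by (apply Rmult_le_compat_l, Hc, (in_Gamma_list_neq y); assumption).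
  rewrite !Hpsi in *; lra.
Qed.

End Intervention.

Lemma derivable_pt_lim_sub_affine (f : R -> R) x l a k :
  derivable_pt_lim f x l -> derivable_pt_lim (fun s => f s - (a * s + k)) x (l - a).
Proof.
  intros Hf.
  assert (Haff := derivable_pt_lim_plus _ _ x _ _
    (derivable_pt_lim_scal id a x 1 (derivable_pt_lim_id x)) (derivable_pt_lim_const k x)).
  replace (a * 1 + 0) with a in Haff by ring.
  exact (derivable_pt_lim_minus _ _ x l a Hf Haff).
Qed.

Lemma derivable_pt_lim_sub_const (f : R -> R) x l k :
  derivable_pt_lim f x l -> derivable_pt_lim (fun s => f s - k) x l.
Proof.
  intros Hf; rewrite <- (Rminus_0_r l).
  apply (derivable_pt_lim_ext (fun s => f s - (0 * s + k))); [intro; ring|].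
  apply derivable_pt_lim_sub_affine, Hf.
Qed.

Lemma cont3_at_minus f g t x y :
  cont3_at f t x y -> cont3_at g t x y -> cont3_at (fun a b d => f a b d - g a b d) t x y.
Proof.
  intros Hf Hg e He.
  destruct (Hf (e / 2)) as [df [Hdf Hf']]; [lra|].
  destruct (Hg (e / 2)) as [dg [Hdg Hg']]; [lra|].
  exists (Rmin df dg); split; [apply Rmin_pos; assumption|].
  intros t' x' y' Ht Hx Hy.
  pose proof (Rmin_l df dg); pose proof (Rmin_r df dg).
  replace (f t' x' y' - g t' x' y' - (f t x y - g t x y))
    with ((f t' x' y' - f t x y) + - (g t' x' y' - g t x y)) by ring.
  eapply Rle_lt_trans; [apply Rabs_triang|]; rewrite Rabs_Ropp.
  assert (Rabs (f t' x' y' - f t x y) < e / 2) by (apply Hf'; lra).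
  assert (Rabs (g t' x' y' - g t x y) < e / 2) by (apply Hg'; lra).
  lra.
Qed.

Lemma cont3_at_const k t x y : cont3_at (fun _ _ _ => k) t x y.
Proof. intros e He; exists 1; split; [lra|]; intros; rewrite Rminus_diag, Rabs_R0; exact He. Qed.

Lemma cont3_at_affine p q r k t x y :
  cont3_at (fun a b d => p * a + q * b + r * d + k) t x y.
Proof.
  intros e He.
  set (K := Rabs p + Rabs q + Rabs r).
  assert (HK : 0 <= K) by (pose proof (Rabs_pos p); pose proof (Rabs_pos q);
                           pose proof (Rabs_pos r); unfold K; lra).
  exists (e / (K + 1)); split; [apply Rdiv_lt_0_compat; lra|].
  intros t' x' y' Ht Hx Hy.
  replace (p * t' + q * x' + r * y' + k - (p * t + q * x + r * y + k))
    with (p * (t' - t) + q * (x' - x) + r * (y' - y)) by ring.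
  assert (Hterm : forall u w, Rabs w < e / (K + 1) -> Rabs (u * w) <= Rabs u * (e / (K + 1))).
  { intros u w Hw; rewrite Rabs_mult; apply Rmult_le_compat_l; [apply Rabs_pos|lra]. }
  assert (Hsum : Rabs (p * (t' - t) + q * (x' - x) + r * (y' - y)) <= K * (e / (K + 1))).
  { pose proof (Hterm p _ Ht); pose proof (Hterm q _ Hx); pose proof (Hterm r _ Hy).
    pose proof (Rabs_triang (p * (t' - t) + q * (x' - x)) (r * (y' - y))).
    pose proof (Rabs_triang (p * (t' - t)) (q * (x' - x))).
    unfold K in *; lra. }
  assert (K * (e / (K + 1)) < e).
  { apply (Rmult_lt_reg_r (K + 1)); [lra|].
    replace (K * (e / (K + 1)) * (K + 1)) with (K * e) by (field; lra). nra. }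
  lra.
Qed.

Lemma is_C12_sub_affine T phi phit phix phiy phixx phixy phiyy p q r k :
  is_C12 T phi phit phix phiy phixx phixy phiyy ->
  is_C12 T (fun t x y z => phi t x y z - (p * t + q * x + r * y + k))
           (fun t x y z => phit t x y z - p) (fun t x y z => phix t x y z - q)
           (fun t x y z => phiy t x y z - r) phixx phixy phiyy.
Proof.
  intros Hphi t x y z HD.
  destruct (Hphi t x y z HD)
    as (Dt & Dx & Dy & Dxx & Dxy & Dyx & Dyy & Kphi & Kt & Kx & Ky & Kxx & Kxy & Kyy).
  repeat split.
  - apply (derivable_pt_lim_ext (fun s => phi s x y z - (p * s + (q * x + r * y + k))));
      [intro; ring|apply derivable_pt_lim_sub_affine, Dt].
  - apply (derivable_pt_lim_ext (fun s => phi t s y z - (q * s + (p * t + r * y + k))));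
      [intro; ring|apply derivable_pt_lim_sub_affine, Dx].
  - apply (derivable_pt_lim_ext (fun s => phi t x s z - (r * s + (p * t + q * x + k))));
      [intro; ring|apply derivable_pt_lim_sub_affine, Dy].
  - apply derivable_pt_lim_sub_const, Dxx.
  - apply derivable_pt_lim_sub_const, Dxy.
  - apply derivable_pt_lim_sub_const, Dyx.
  - apply derivable_pt_lim_sub_const, Dyy.
  - apply (cont3_at_minus _ (fun a b d => p * a + q * b + r * d + k));
      [exact Kphi|apply cont3_at_affine].
  - apply (cont3_at_minus _ (fun _ _ _ => p)); [exact Kt|apply cont3_at_const].
  - apply (cont3_at_minus _ (fun _ _ _ => q)); [exact Kx|apply cont3_at_const].
  - apply (cont3_at_minus _ (fun _ _ _ => r)); [exact Ky|apply cont3_at_const].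
  - exact Kxx.
  - exact Kxy.
  - exact Kyy.
Qed.

Lemma Lop_sub_gradient b sigma t x z px py pxx pxy pyy e :
  Lop b sigma t x z (px - e) (py - e) pxx pxy pyy
  = Lop b sigma t x z px py pxx pxy pyy - e * (b t x * (1 + IZR z)).
Proof. unfold Lop; ring. Qed.

Lemma Rabs_IZR_le_max C2 C3 z : inK C2 C3 z -> Rabs (IZR z) <= IZR (Z.max C2 C3).
Proof. unfold inK; intros Hz; rewrite <- abs_IZR; apply IZR_le; lia. Qed.

Lemma mul_one_plus_le (u w M N : R) :
  Rabs u <= M -> Rabs w <= N -> u * (1 + w) <= M * (N + 1).
Proof.
  intros Hu Hw.
  assert (Rabs (1 + w) <= N + 1) by (pose proof (Rabs_triang 1 w); rewrite Rabs_R1 in *; lra).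
  eapply Rle_trans; [apply Rle_abs|]; rewrite Rabs_mult.
  apply Rmult_le_compat; [apply Rabs_pos|apply Rabs_pos|exact Hu|assumption].
Qed.
Theorem mainTheorem9
  (T : R) (b sigma : R -> R -> R) (c : Z -> R) (U : R -> R) (C2 C3 : Z)
  (HT : 0 < T)
  (HC2 : (0 < C2)%Z) (HC3 : (0 < C3)%Z)
  (Hc0 : c 0%Z = 0)
  (Hcpos : forall z, z <> 0%Z -> 0 < c z)
  (Hcsub : forall z1 z2, c z1 + c z2 >= c (z1 + z2)%Z)
  (HU0 : U 0 = 0)
  (HUnonneg : forall r, 0 <= r -> 0 <= U r)
  (HUincr : forall r s, 0 <= r -> r < s -> U r < U s)
  (HUconc : forall r s l, 0 <= r -> 0 <= s -> r <> s -> 0 < l < 1 ->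
             l * U r + (1 - l) * U s < U (l * r + (1 - l) * s))
  (v : R -> R -> R -> Z -> R)
  (Hvcont : continuous_on_closure T c C2 C3 v)
  (Hvsuper : viscosity_supersolution T b sigma c U C2 C3 v)
  (Hbound : exists M, forall t x, 0 <= t <= T -> 0 <= x ->
              Rabs (b t x) + Rabs (sigma t x) <= M)
  (nb : R)
  (Hnb : is_lub (fun r => exists t x, 0 <= t <= T /\ 0 <= x /\ r = Rabs (b t x)) nb)
  (rho : R)
  (Hrho : (exists z0, z0 <> 0%Z /\ c z0 = 2 * rho) /\
          (forall z, z <> 0%Z -> 2 * rho <= c z))
  (C5 : R)
  (HC5 : C5 = nb * (IZR (Z.max C2 C3) + 1) + 2 * rho)
  (eps : R) (Heps : 0 < eps)
  (tb xb yb : R) (zb : Z)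
  (Htb : 0 < tb < T) (HO : inO c C2 C3 xb yb zb)
  (phi phit phix phiy phixx phixy phiyy : R -> R -> R -> Z -> R)
  (Hphi : is_C12 T phi phit phix phiy phixx phixy phiyy)
  (Hle : forall t x y z, 0 < t < T -> inO c C2 C3 x y z ->
           phi t x y z <= v t x y z + eps * (x + y + C5 * (T - t)))
  (Heq : phi tb xb yb zb = v tb xb yb zb + eps * (xb + yb + C5 * (T - tb))) :
  minus_ext_gt (phi tb xb yb zb) (Sop c C2 C3 phi tb xb yb zb) (eps * rho)
  /\ - phit tb xb yb zb
     - Lop b sigma tb xb zb (phix tb xb yb zb) (phiy tb xb yb zb)
           (phixx tb xb yb zb) (phixy tb xb yb zb) (phiyy tb xb yb zb)
     > eps * rho.
Proof.
  destruct Hrho as [[z0 [Hz0 Hcz0]] Hrho_min].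
  assert (Hrho_pos : 0 < rho) by (pose proof (Hcpos z0 Hz0); lra).
  assert (Hmargin : eps * rho < eps * (2 * rho)) by (apply Rmult_lt_compat_l; lra).
  set (psi := fun t x y z =>
                phi t x y z - (- eps * C5 * t + eps * x + eps * y + eps * C5 * T)).
  assert (Hpsi_le : forall t x y z, 0 < t < T -> inO c C2 C3 x y z -> psi t x y z <= v t x y z)
    by (intros t x y z Ht Hxyz; pose proof (Hle t x y z Ht Hxyz); unfold psi; lra).
  assert (Hpsi_eq : psi tb xb yb zb = v tb xb yb zb) by (unfold psi; lra).
  pose proof (proj1 Hvsuper tb xb yb zb Htb HO _ _ _ _ _ _ _
              (is_C12_sub_affine _ _ _ _ _ _ _ _ (- eps * C5) eps eps (eps * C5 * T) Hphi)
              Hpsi_le Hpsi_eq) as Hpsi_super.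
  assert (Hjump : forall zt, zt <> zb -> 2 * rho <= c (zt - zb)%Z)
    by (intros zt Hzt; apply Hrho_min; lia).
  split.
  - refine (Sop_gap_of_shift c C2 C3 phi psi tb xb yb zb
             (- eps * C5 * tb + eps * xb + eps * C5 * T) eps (2 * rho) _ _ (Rlt_le _ _ Heps)
             Hmargin Hjump _ Hpsi_super).
    intros; unfold psi; ring.
  - pose proof (proj1 Hpsi_super) as Hdrift; cbv beta in Hdrift.
    rewrite Lop_sub_gradient in Hdrift.
    destruct HO as (Hxb & _ & HzK).
    assert (Hbn : Rabs (b tb xb) <= nb) by (apply (proj1 Hnb); exists tb, xb; lra).
    pose proof (mul_one_plus_le _ _ _ _ Hbn (Rabs_IZR_le_max _ _ _ HzK)).
    assert (eps * (2 * rho) <= eps * (C5 - b tb xb * (1 + IZR zb)))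
      by (apply Rmult_le_compat_l; lra).
    lra.
Qed.
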